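(* Let $Q$ be a completely semisimple inverse semigroup satisfying the ascending chain condition on the $\leq_{\mathcal{J}}$-order of its $\mathcal{J}$-classes. Then every left I-order in $Q$ is straight.
   Context: For an element $a$ of an inverse semigroup $Q$, $a^{-1}$ is its unique inverse. A subsemigroup $S$ of $Q$ is a left I-order in $Q$ if every $q\in Q$ can be written $q=a^{-1}b$ with $a,b\in S$; it is straight if $a,b$ can always be chosen with $a\,\mathcal{R}\,b$ in $Q$. An inverse semigroup is completely semisimple if no two distinct idempotents $e>f$ (in the natural order) are $\mathcal{D}$-related (equivalently, every principal factor is completely simple or completely 0-simple). The ascending chain condition on the $\leq_{\mathcal{J}}$-order means there is no infinite strictly ascending chain $J_1<J_2<\cdots$ of $\mathcal{J}$-classes, where $J_a\leq J_b$ iff $Q^1aQ^1\subseteq Q^1bQ^1$. *)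

Set Implicit Arguments.

Section InvSgp.
Variables (T : Type) (mul : T -> T -> T) (inv : T -> T).

Definition is_inverse_of (a x : T) : Prop :=
  mul (mul a x) a = a /\ mul (mul x a) x = x.

Definition IsInverseSemigroup : Prop :=
  (forall a b c, mul a (mul b c) = mul (mul a b) c) /\
  (forall a, is_inverse_of a (inv a) /\
             forall x, is_inverse_of a x -> x = inv a).

(* multiplication by an element of Q^1 = Q + {1}; None plays the role of 1 *)
Definition lmul1 (x : option T) (a : T) : T :=
  match x with None => a | Some x => mul x a end.
Definition rmul1 (a : T) (y : option T) : T :=
  match y with None => a | Some y => mul a y end.

Definition Rrel (a b : T) : Prop :=
  (exists y, a = rmul1 b y) /\ (exists y, b = rmul1 a y).
Definition Lrel (a b : T) : Prop :=
  (exists x, a = lmul1 x b) /\ (exists x, b = lmul1 x a).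
Definition Drel (a b : T) : Prop := exists c, Rrel a c /\ Lrel c b.

Definition idempotent (e : T) : Prop := mul e e = e.
Definition idem_le (f e : T) : Prop := f = mul e f /\ f = mul f e.

Definition completely_semisimple : Prop :=
  forall e f, idempotent e -> idempotent f -> idem_le f e -> e <> f ->
    ~ Drel e f.

(* J_a <= J_b  iff  Q^1 a Q^1 ⊆ Q^1 b Q^1  iff  a ∈ Q^1 b Q^1 *)
Definition leJ (a b : T) : Prop := exists x y, a = rmul1 (lmul1 x b) y.

Definition acc_J : Prop :=
  ~ exists f : nat -> T, forall n, leJ (f n) (f (S n)) /\ ~ leJ (f (S n)) (f n).

Definition subsemigroup (S : T -> Prop) : Prop :=
  forall a b, S a -> S b -> S (mul a b).

Definition left_I_order (S : T -> Prop) : Prop :=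
  subsemigroup S /\
  forall q, exists a b, S a /\ S b /\ q = mul (inv a) b.

Definition straight_left_I_order (S : T -> Prop) : Prop :=
  left_I_order S /\
  forall q, exists a b, S a /\ S b /\ Rrel a b /\ q = mul (inv a) b.

End InvSgp.

From Stdlib Require Import Classical ClassicalEpsilon.

Set Implicit Arguments.

(** Every idempotent [e] has the form [s^-1 s] with [s] in [S]; then
    [q = a^-1 b] equals [(s a)^-1 (s b)] for [s^-1 s = a a^-1 b b^-1], and
    [s a], [s b] are R-related.  To write [e = a^-1 b] in this form, note
    [e <= a^-1 a] and [e <=_J a a^-1].  If [a a^-1 <=_J e], then also
    [a^-1 a <=_J e], and complete semisimplicity forces [e = a^-1 a]: an
    idempotent above [e] and J-below it is D-related to one below [e].
    Otherwise [a a^-1] is strictly J-above [e], so by the ascending chain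
    condition we may assume [a a^-1 = u^-1 u] with [u] in [S], and then
    [e = e^-1 e = b^-1 a a^-1 b = (u b)^-1 (u b)]. *)

Lemma well_founded_of_no_descending_chain (A : Type) (R : A -> A -> Prop) :
  ~ (exists f : nat -> A, forall n, R (f (S n)) (f n)) -> well_founded R.
Proof.
  intros no_chain x. apply NNPP; intros Nx.
  assert (step : forall y : {y | ~ Acc R y},
             {z : {z | ~ Acc R z} | R (proj1_sig z) (proj1_sig y)}).
  { intros [y Ny]. apply constructive_indefinite_description.
    apply NNPP; intros no_pred. apply Ny; constructor; intros z Rzy.
    apply NNPP; intros Nz. apply no_pred. now exists (exist _ z Nz). }
  apply no_chain.
  exists (fun n => proj1_sig (Nat.iter n (fun y => proj1_sig (step y)) (exist _ x Nx))).
  intros n. exact (proj2_sig (step _)).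
Qed.

Section InverseSemigroup.

Context {T : Type} {mul : T -> T -> T} {inv : T -> T}.
Hypothesis HQ : IsInverseSemigroup mul inv.
Local Infix "·" := mul (at level 40, left associativity).

Lemma mulA a b c : a · (b · c) = a · b · c.
Proof. exact (proj1 HQ a b c). Qed.

Local Ltac by_assoc := repeat rewrite mulA; reflexivity.

Lemma mul_inv_mul a : a · inv a · a = a.
Proof. exact (proj1 (proj1 (proj2 HQ a))). Qed.

Lemma inv_mul_inv a : inv a · a · inv a = inv a.
Proof. exact (proj2 (proj1 (proj2 HQ a))). Qed.

Lemma inv_unique a x : a · x · a = a -> x · a · x = x -> x = inv a.
Proof. intros H1 H2. now apply (proj2 (proj2 HQ a)). Qed.

Lemma inv_inv a : inv (inv a) = a.
Proof. symmetry. apply inv_unique; [apply inv_mul_inv | apply mul_inv_mul]. Qed.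

Lemma inv_idempotent e : idempotent mul e -> inv e = e.
Proof. intros He. symmetry. apply inv_unique; now rewrite He. Qed.

Lemma idempotent_mul e f :
  idempotent mul e -> idempotent mul f -> idempotent mul (e · f).
Proof.
  unfold idempotent. intros He Hf.
  (* [x := (e f)^-1] equals [f x e], hence is idempotent, and so is [e f = x^-1]. *)
  set (x := inv (e · f)).
  assert (Hx : x · (e · f) · x = x) by apply inv_mul_inv.
  assert (Hfxe : f · x · e = x).
  { apply inv_unique.
    - transitivity (e · f · x · (e · f)); [|apply mul_inv_mul].
      transitivity (e · (f · f) · x · (e · e) · f); [by_assoc|].
      rewrite He, Hf. by_assoc.
    - transitivity (f · (x · (e · f) · x) · e); [|now rewrite Hx].
      transitivity (f · x · (e · e) · (f · f) · x · e); [by_assoc|].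
      rewrite He, Hf. by_assoc. }
  assert (Hxx : x · x = x).
  { transitivity (f · (x · (e · f) · x) · e); [rewrite <- Hfxe at 1 2; by_assoc|].
    now rewrite Hx. }
  rewrite <- (inv_inv (e · f)). fold x. now rewrite (inv_idempotent Hxx).
Qed.

Lemma idempotent_comm e f :
  idempotent mul e -> idempotent mul f -> e · f = f · e.
Proof.
  intros He Hf.
  rewrite <- (inv_idempotent (idempotent_mul He Hf)). symmetry.
  apply inv_unique.
  - transitivity (e · (f · f) · (e · e) · f); [by_assoc|]. rewrite He, Hf.
    transitivity ((e · f) · (e · f)); [by_assoc|]. apply idempotent_mul; assumption.
  - transitivity (f · (e · e) · (f · f) · e); [by_assoc|]. rewrite He, Hf.
    transitivity ((f · e) · (f · e)); [by_assoc|]. apply idempotent_mul; assumption.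
Qed.

Lemma idempotent_mul_inv a : idempotent mul (a · inv a).
Proof. unfold idempotent. now rewrite mulA, mul_inv_mul. Qed.

Lemma idempotent_inv_mul a : idempotent mul (inv a · a).
Proof. unfold idempotent. now rewrite mulA, inv_mul_inv. Qed.

Lemma inv_mul_distr a b : inv (a · b) = inv b · inv a.
Proof.
  assert (Hcomm : inv a · a · (b · inv b) = b · inv b · (inv a · a)).
  { apply idempotent_comm; [apply idempotent_inv_mul | apply idempotent_mul_inv]. }
  symmetry. apply inv_unique.
  - transitivity (a · (b · inv b · (inv a · a)) · b); [by_assoc|].
    rewrite <- Hcomm.
    transitivity ((a · inv a · a) · (b · inv b · b)); [by_assoc|].
    now rewrite !mul_inv_mul.
  - transitivity (inv b · (inv a · a · (b · inv b)) · inv a); [by_assoc|].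
    rewrite Hcomm.
    transitivity ((inv b · b · inv b) · (inv a · a · inv a)); [by_assoc|].
    now rewrite !inv_mul_inv.
Qed.

Lemma mul_absorb s f : inv s · s · f = inv s · s -> s · f = s.
Proof.
  intros H. transitivity (s · (inv s · s · f)).
  - transitivity (s · inv s · s · f); [now rewrite mul_inv_mul | by_assoc].
  - rewrite H, mulA. apply mul_inv_mul.
Qed.

Lemma idem_le_of_mul_l e f :
  idempotent mul e -> idempotent mul f -> e · f = f -> idem_le mul f e.
Proof.
  intros He Hf Hef. split; [easy|].
  now rewrite <- (idempotent_comm He Hf).
Qed.

Lemma idem_le_trans f e d : idem_le mul f e -> idem_le mul e d -> idem_le mul f d.
Proof.
  intros [Hfl Hfr] [Hel Her]. split.
  - rewrite Hfl at 1 2. rewrite Hel at 1. by_assoc.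
  - rewrite Hfr at 1 2. rewrite Her at 1. by_assoc.
Qed.

Lemma idem_le_antisym e f : idem_le mul f e -> idem_le mul e f -> e = f.
Proof. intros [Hf _] [_ He]. congruence. Qed.

Lemma mul_lmul1 u x a : u · lmul1 mul x a = rmul1 mul u x · a.
Proof. destruct x; simpl; [by_assoc | reflexivity]. Qed.

Lemma rmul1_mul b y v : rmul1 mul b y · v = b · lmul1 mul y v.
Proof. destruct y; simpl; [symmetry; by_assoc | reflexivity]. Qed.

Lemma leJ_mul x q y : leJ mul (x · q · y) q.
Proof. now exists (Some x), (Some y). Qed.

(* [Q^1 p Q^1 = Q p Q], since [p = (p p^-1) p (p^-1 p)]. *)
Lemma leJ_elim p q : leJ mul p q -> exists x y, p = x · q · y.
Proof.
  intros (x & y & Hp).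
  exists (rmul1 mul (p · inv p) x), (lmul1 mul y (inv p · p)).
  transitivity (p · inv p · p · (inv p · p)); [now rewrite mulA, !mul_inv_mul|].
  rewrite Hp at 3. now rewrite <- mulA, rmul1_mul, mulA, (mul_lmul1 (p · inv p)).
Qed.

Lemma leJ_trans p q r : leJ mul p q -> leJ mul q r -> leJ mul p r.
Proof.
  intros Hpq Hqr.
  destruct (leJ_elim Hpq) as (x & y & ->), (leJ_elim Hqr) as (x' & y' & ->).
  replace (x · (x' · r · y') · y) with (x · x' · r · (y' · y)) by by_assoc.
  apply leJ_mul.
Qed.

Lemma leJ_inv_mul_mul_inv a : leJ mul (inv a · a) (a · inv a).
Proof.
  replace (inv a · a) with (inv a · (a · inv a) · a) by (now rewrite mulA, inv_mul_inv).
  apply leJ_mul.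
Qed.

Lemma Drel_idem_below_of_leJ e F :
  idempotent mul e -> idempotent mul F -> leJ mul F e ->
  exists g, idempotent mul g /\ idem_le mul g e /\ Drel mul F g.
Proof.
  intros He HF HFe. destruct (leJ_elim HFe) as (x & y & HFxy).
  set (v := F · x · e). exists (inv v · v).
  assert (Hg : idempotent mul (inv v · v)) by apply idempotent_inv_mul.
  assert (Hge : inv v · v · e = inv v · v).
  { unfold v. transitivity (inv (F · x · e) · (F · x · (e · e))); [by_assoc|].
    now rewrite He. }
  split; [exact Hg | split; [|exists v; split; split]].
  - apply idem_le_of_mul_l; [exact He | exact Hg |].
    now rewrite (idempotent_comm He Hg).
  - exists (Some (e · y · F)); simpl; unfold v.
    transitivity (F · (x · e · y) · F); [now rewrite <- HFxy, !HF|].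
    transitivity (F · x · (e · e) · y · F); [rewrite He; by_assoc | by_assoc].
  - exists (Some (x · e)); simpl; unfold v. by_assoc.
  - exists (Some v); simpl. rewrite mulA. symmetry. apply mul_inv_mul.
  - now exists (Some (inv v)).
Qed.

Definition ltJ (a b : T) : Prop := leJ mul a b /\ ~ leJ mul b a.

Lemma acc_J_well_founded : acc_J mul -> well_founded (fun a b => ltJ b a).
Proof. intros acc. now apply well_founded_of_no_descending_chain. Qed.

Lemma straight_decomposition a b s :
  inv s · s = a · inv a · (b · inv b) ->
  Rrel mul (s · a) (s · b) /\ inv (s · a) · (s · b) = inv a · b.
Proof.
  intros Hs.
  assert (Hsa : s · (a · inv a) = s).
  { apply mul_absorb. rewrite Hs, <- mulA.
    rewrite (idempotent_comm (idempotent_mul_inv b) (idempotent_mul_inv a)).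
    now rewrite mulA, (idempotent_mul_inv a). }
  assert (Hsb : s · (b · inv b) = s).
  { apply mul_absorb. now rewrite Hs, <- mulA, (idempotent_mul_inv b). }
  split; [split|].
  - exists (Some (inv b · a)); simpl.
    transitivity (s · (b · inv b) · a); [now rewrite Hsb | by_assoc].
  - exists (Some (inv a · b)); simpl.
    transitivity (s · (a · inv a) · b); [now rewrite Hsa | by_assoc].
  - rewrite inv_mul_distr.
    transitivity (inv a · (inv s · s) · b); [by_assoc|]. rewrite Hs.
    transitivity (inv a · a · inv a · (b · inv b · b)); [by_assoc|].
    now rewrite inv_mul_inv, mul_inv_mul.
Qed.

Section CompletelySemisimple.

Hypothesis cs : completely_semisimple mul.

Lemma cs_idem_eq_of_Drel e f :
  idempotent mul e -> idempotent mul f -> idem_le mul f e -> Drel mul e f -> e = f.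
Proof.
  intros He Hf Hfe HD. apply NNPP; intros Hne. exact (cs He Hf Hfe Hne HD).
Qed.

Lemma cs_idem_eq_of_leJ e F :
  idempotent mul e -> idempotent mul F -> idem_le mul e F -> leJ mul F e -> e = F.
Proof.
  intros He HF HeF HFe.
  destruct (Drel_idem_below_of_leJ He HF HFe) as (g & Hg & Hge & HFg).
  assert (HFg_eq : F = g).
  { apply cs_idem_eq_of_Drel; [exact HF | exact Hg | | exact HFg].
    exact (idem_le_trans Hge HeF). }
  apply idem_le_antisym; [now rewrite HFg_eq | exact HeF].
Qed.

Section LeftIOrder.

Hypothesis acc : acc_J mul.
Variable S : T -> Prop.
Hypothesis S_closed : subsemigroup mul S.
Hypothesis S_rep : forall q, exists a b, S a /\ S b /\ q = inv a · b.

Lemma exists_inv_mul_eq_idempotent e :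
  idempotent mul e -> exists s, S s /\ inv s · s = e.
Proof.
  induction e as [e IH] using (well_founded_ind (acc_J_well_founded acc)).
  intros He. destruct (S_rep e) as (a & b & Sa & Sb & Hab).
  assert (He_le : idem_le mul e (inv a · a)).
  { apply idem_le_of_mul_l; [apply idempotent_inv_mul | exact He |].
    now rewrite Hab, mulA, inv_mul_inv. }
  destruct (classic (leJ mul (a · inv a) e)) as [HJ | HJ].
  - exists a. split; [exact Sa|]. symmetry.
    apply cs_idem_eq_of_leJ; [exact He | apply idempotent_inv_mul | exact He_le |].
    exact (leJ_trans (leJ_inv_mul_mul_inv a) HJ).
  - assert (He_a : leJ mul e (a · inv a)).
    { rewrite Hab.
      replace (inv a · b) with (inv a · (a · inv a) · b) by now rewrite mulA, inv_mul_inv.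
      apply leJ_mul. }
    destruct (IH (a · inv a) (conj He_a HJ) (idempotent_mul_inv a)) as (u & Su & Hu).
    exists (u · b). split; [now apply S_closed|].
    rewrite inv_mul_distr.
    transitivity (inv b · (inv u · u) · b); [by_assoc|]. rewrite Hu.
    transitivity (inv (inv a · b) · (inv a · b)); [rewrite inv_mul_distr, inv_inv; by_assoc|].
    rewrite <- Hab, (inv_idempotent He). exact He.
Qed.

End LeftIOrder.

End CompletelySemisimple.

End InverseSemigroup.

Theorem theorem2p4 (T : Type) (mul : T -> T -> T) (inv : T -> T) :
  IsInverseSemigroup mul inv ->
  completely_semisimple mul ->
  acc_J mul ->
  forall S : T -> Prop, left_I_order mul inv S -> straight_left_I_order mul inv S.
Proof.
  intros HQ cs acc S [S_closed S_rep].
  split; [split; assumption|].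
  intros q. destruct (S_rep q) as (a & b & Sa & Sb & ->).
  assert (He : idempotent mul (mul (mul a (inv a)) (mul b (inv b)))).
  { apply (idempotent_mul HQ); apply (idempotent_mul_inv HQ). }
  destruct (exists_inv_mul_eq_idempotent HQ cs acc S_closed S_rep He) as (s & Ss & Hs).
  destruct (straight_decomposition HQ a b s Hs) as [HR Hq].
  exists (mul s a), (mul s b).
  split; [now apply S_closed | split; [now apply S_closed | split; [exact HR | symmetry; exact Hq]]].
Qed.
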